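(* Let $\alpha$ be a constant and let $(e_n)_{n\in\mathbb Z}$ be a sequence of nonzero numbers satisfying $$e_{n-1}e_{n-2}^2e_{n-5}+e_{n-1}^2e_{n-4}^2+e_ne_{n-3}^2e_{n-4}=\alpha\,e_{n-2}^2e_{n-3}^2$$ for all $n$. Put $u_n=\frac{e_ne_{n+3}}{e_{n+1}e_{n+2}}$ and $J=(u_1u_0-\alpha)(u_1+u_0)$. Then for all $n$, $$e_{n+5}e_n+\alpha\,e_{n+4}e_{n+1}+J\,e_{n+3}e_{n+2}=0.$$
   Context: The sequence $u_n$ satisfies $u_{n+1}+u_{n-1}=(\alpha-u_n^2)/u_n$, for which $(u_nu_{n-1}-\alpha)(u_n+u_{n-1})$ is a first integral, so $J$ equals this quantity for every $n$. *)

From mathcomp Require Import all_boot all_order all_algebra.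
Set Implicit Arguments. Unset Strict Implicit. Unset Printing Implicit Defensive.
Import GRing.Theory Num.Theory.
Local Open Scope ring_scope.

Definition useq (R : numFieldType) (e : int -> R) (n : int) : R :=
  e n * e (n + 3) / (e (n + 1) * e (n + 2)).

(* Put [K n = (e_(n+5) e_n + alpha e_(n+4) e_(n+1)) / (e_(n+3) e_(n+2))].  If [R_n = 0]
   is the recurrence relating [e_n, ..., e_(n+5)], then
   [e_(n+1) R_(n+1) - e_(n+5) R_n = e_(n+2) e_(n+3)^3 e_(n+4) (K (n+1) - K n)],
   so [K] is constant; eliminating [e_5] with [R_0] shows that [K 0 = -J]. *)

From mathcomp Require Import all_boot all_order all_algebra.
From mathcomp Require Import ring.
Set Implicit Arguments.
Unset Strict Implicit.
Import GRing.Theory Num.Theory.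
Local Open Scope ring_scope.

Lemma shift_invariant_const (T : Type) (f : int -> T) :
  (forall n, f (n + 1) = f n) -> forall n, f n = f 0.
Proof.
move=> fS; elim/int_rec=> [//|m IHm|m IHm].
- by rewrite -IHm -addn1 PoszD fS.
- by rewrite -IHm -(fS (- m.+1%:Z)) -addn1 PoszD opprD addrNK.
Qed.

Section SomosRatio.

Variables (R : fieldType) (alpha : R) (e : int -> R).
Hypothesis e_neq0 : forall n, e n != 0.
Hypothesis e_rec : forall n,
  e (n + 4) * e (n + 3) ^+ 2 * e n + e (n + 4) ^+ 2 * e (n + 1) ^+ 2
    + e (n + 5) * e (n + 2) ^+ 2 * e (n + 1)
  = alpha * e (n + 3) ^+ 2 * e (n + 2) ^+ 2.

Definition somos_ratio n :=
  (e (n + 5) * e n + alpha * e (n + 4) * e (n + 1)) / (e (n + 3) * e (n + 2)).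

Lemma somos_ratioS n : somos_ratio (n + 1) = somos_ratio n.
Proof.
have shift k : n + 1 + k = n + (k + 1) by rewrite addrAC addrA.
have := e_rec (n + 1); have := e_rec n; rewrite /somos_ratio !shift /=.
set x0 := e n; set x1 := e (n + 1); set x2 := e (n + 2); set x3 := e (n + 3).
set x4 := e (n + 4); set x5 := e (n + 5); set x6 := e (n + 6).
move=> rec0 rec1.
apply/eqP; rewrite eqr_div ?mulf_neq0 ?e_neq0 //; apply/eqP.
apply: (mulIf (e_neq0 (n + 3))); rewrite -/x3; apply/subr0_eq.
transitivity (x1 * (x5 * x4 ^+ 2 * x1 + x5 ^+ 2 * x2 ^+ 2 + x6 * x3 ^+ 2 * x2
                      - alpha * x4 ^+ 2 * x3 ^+ 2)
              - x5 * (x4 * x3 ^+ 2 * x0 + x4 ^+ 2 * x1 ^+ 2 + x5 * x2 ^+ 2 * x1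
                      - alpha * x3 ^+ 2 * x2 ^+ 2)); first ring.
by rewrite rec0 rec1 !subrr !mulr0 subrr.
Qed.

Lemma somos_ratio_const n : somos_ratio n = somos_ratio 0.
Proof. exact: shift_invariant_const somos_ratioS n. Qed.

End SomosRatio.

Lemma somos_ratio0 (R : numFieldType) (alpha : R) (e : int -> R) :
  (forall n, e n != 0) ->
  e 4 * e 3 ^+ 2 * e 0 + e 4 ^+ 2 * e 1 ^+ 2 + e 5 * e 2 ^+ 2 * e 1
    = alpha * e 3 ^+ 2 * e 2 ^+ 2 ->
  somos_ratio alpha e 0 = - ((useq e 1 * useq e 0 - alpha) * (useq e 1 + useq e 0)).
Proof.
move=> e_neq0 rec0.
have e1_neq0 := e_neq0 1; have e2_neq0 := e_neq0 2; have e3_neq0 := e_neq0 3.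
rewrite /somos_ratio /useq !add0r.
have -> : e 5 = (alpha * e 3 ^+ 2 * e 2 ^+ 2 - e 4 * e 3 ^+ 2 * e 0
                 - e 4 ^+ 2 * e 1 ^+ 2) / (e 2 ^+ 2 * e 1).
  have denom_neq0 : e 2 ^+ 2 * e 1 != 0 by rewrite mulf_neq0 ?expf_neq0.
  by apply: (mulIf denom_neq0); rewrite divfK // -rec0; ring.
field.
by rewrite e1_neq0 e2_neq0 e3_neq0.
Qed.

Theorem proposition5 (R : numFieldType) (alpha : R) (e : int -> R)
  (He0 : forall n : int, e n != 0)
  (Hrec : forall n : int,
     e (n - 1) * e (n - 2) ^+ 2 * e (n - 5) + e (n - 1) ^+ 2 * e (n - 4) ^+ 2
       + e n * e (n - 3) ^+ 2 * e (n - 4)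
     = alpha * e (n - 2) ^+ 2 * e (n - 3) ^+ 2) :
  let J := (useq e 1 * useq e 0 - alpha) * (useq e 1 + useq e 0) in
  forall n : int,
    e (n + 5) * e n + alpha * e (n + 4) * e (n + 1) + J * e (n + 3) * e (n + 2) = 0.
Proof.
move=> J n.
have rec m : e (m + 4) * e (m + 3) ^+ 2 * e m + e (m + 4) ^+ 2 * e (m + 1) ^+ 2
    + e (m + 5) * e (m + 2) ^+ 2 * e (m + 1)
  = alpha * e (m + 3) ^+ 2 * e (m + 2) ^+ 2.
  by have := Hrec (m + 5); rewrite -!(addrA m 5) subrr addr0.
have denom_neq0 : e (n + 3) * e (n + 2) != 0 by rewrite mulf_neq0 ?He0.
have := somos_ratio_const He0 rec n.
rewrite (somos_ratio0 He0 (rec 0)) -/J => /(canRL (divfK denom_neq0)) ->; ring.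
Qed.
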